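(* For every $d>0$ there is a constant $c(d)>0$ such that for every $q\in(0,1/2)$ and every integer $r>2$ with $2^r\le d/q$, $$T_{\rm rel}(\ell_r)\le q^{-c(d)}\frac{r!}{q^r2^{\binom r2}},$$ where $\ell_1=3$ and $\ell_i=2\ell_{i-1}-\lceil\ell_{i-1}/r\rceil$ for $2\le i\le r$.
   Context: Fix $q\in(0,1/2)$, $p=1-q$. $T_{\rm rel}(L)$ is the relaxation time (inverse spectral gap) of the East process on $\{1,\dots,L\}$: the Markov chain on $\{0,1\}^{\{1,\dots,L\}}$ with generator $\mathcal L f(\sigma)=\sum_{x}c_x(\sigma)[\pi_x(f)-f](\sigma)$, $c_1\equiv1$, $c_x(\sigma)=1-\sigma_{x-1}$ ($x\ge2$), $\pi_x(f)$ the average over $\sigma_x\sim$ Bernoulli$(p)$ (value $1$ w.p. $p$). *)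

From Stdlib Require Import Reals List Arith.
Import ListNotations.
Open Scope R_scope.

(* A configuration of the East process on {1,...,L} is a list of booleans of
   length L; site x (1 <= x <= L) is the entry at index x-1; true = 1. *)
Definition site (s : list bool) (x : nat) : bool := nth (x - 1) s false.

Fixpoint set_nth_b (s : list bool) (i : nat) (b : bool) : list bool :=
  match s, i with
  | [], _ => []
  | _ :: t, O => b :: t
  | a :: t, S j => a :: set_nth_b t j b
  end.
Definition set_site (s : list bool) (x : nat) (b : bool) : list bool :=
  set_nth_b s (x - 1) b.

Fixpoint configs (L : nat) : list (list bool) :=
  match L with
  | O => [[]]
  | S L' => flat_map (fun s => [true :: s; false :: s]) (configs L')
  end.

(* product Bernoulli(p) measure, p = 1 - q, weight of a configuration *)
Fixpoint weight (q : R) (s : list bool) : R :=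
  match s with
  | [] => 1
  | b :: t => (if b then 1 - q else q) * weight q t
  end.

Definition mu (q : R) (L : nat) (f : list bool -> R) : R :=
  fold_right Rplus 0 (map (fun s => weight q s * f s) (configs L)).

Definition Var (q : R) (L : nat) (f : list bool -> R) : R :=
  mu q L (fun s => f s * f s) - mu q L f * mu q L f.

Definition constr (s : list bool) (x : nat) : R :=
  match x with
  | O | S O => 1
  | S (S _ as y) => if site s y then 0 else 1
  end.

Definition pi_x (q : R) (x : nat) (f : list bool -> R) (s : list bool) : R :=
  (1 - q) * f (set_site s x true) + q * f (set_site s x false).

Definition gen (q : R) (L : nat) (f : list bool -> R) (s : list bool) : R :=
  fold_right Rplus 0
    (map (fun x => constr s x * (pi_x q x f s - f s)) (seq 1 L)).

Definition Dir (q : R) (L : nat) (f : list bool -> R) : R :=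
  - mu q L (fun s => f s * gen q L f s).

Definition is_glb (E : R -> Prop) (m : R) : Prop :=
  (forall x, E x -> m <= x) /\ (forall b, (forall x, E x -> b <= x) -> b <= m).

Definition is_spectral_gap (q : R) (L : nat) (g : R) : Prop :=
  is_glb (fun t => exists f : list bool -> R,
            Var q L f <> 0 /\ t = Dir q L f / Var q L f) g.

(* ell r i = \ell_i for 1 <= i:  ell_1 = 3,
   ell_i = 2 ell_{i-1} - ceil(ell_{i-1} / r) *)
Fixpoint ell (r i : nat) : nat :=
  match i with
  | O | S O => 3
  | S (S _ as j) =>
      let a := ell r j in (2 * a - (a + r - 1) / r)%nat
  end.

(* Write D(f) for the Dirichlet form and say that T is a Poincaré constant on
   {1,...,L} if Var f <= T D(f) for all f; such a T bounds the inverse gap.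
   1. D(f) = -mu(f Lf) is the average of the energy density
      sum_x c_x q p (f(sigma^{x,1}) - f(sigma^{x,0}))^2 (reversibility of each
      resampling with respect to the product measure mu).
   2. Bisection: if T is a Poincaré constant for every length <= a, then on
      length a + n, n <= a - d + 1, we get (1 - p^d) Var f <= 5 T D(f).  The
      variance splits into the mean variance inside the left block {1..a},
      controlled by T, and the variance of the left-block mean; for the latter
      we condition on the first empty site x of the window {a-d+1..a}, behind
      which the last a + n - x <= a sites form an autonomous East process.
   3. From T = 1 on one site, two steps give 25/q^2 up to length ell_1 = 3;
      step i uses the window d = ceil(ell_i / r) >= 2^(i-1)/r and costs a
      factor 5/(1 - p^d) <= growth/2^i, where growth = 10 (1 + 3d) r / q.
   4. After r - 1 steps the bound is 25/q^2 growth^(r-1) / 2^(r choose 2), and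
      the geometric factors (using r^r <= 3^r r!) are absorbed into a power of
      1/q since 2^r <= d/q. *)

From Stdlib Require Import Reals List Arith Lia Lra Psatz.
Import ListNotations.
Open Scope R_scope.

Definition sumR {A} (l : list A) (F : A -> R) : R := fold_right Rplus 0 (map F l).

Lemma sumR_scal {A} (l : list A) c F : sumR l (fun x => c * F x) = c * sumR l F.
Proof. induction l; unfold sumR in *; simpl; [ring | rewrite IHl; ring]. Qed.

Lemma sumR_opp {A} (l : list A) F : sumR l (fun x => - F x) = - sumR l F.
Proof. induction l; unfold sumR in *; simpl; [ring | rewrite IHl; ring]. Qed.

Lemma sumR_app {A} (l1 l2 : list A) F : sumR (l1 ++ l2) F = sumR l1 F + sumR l2 F.
Proof. induction l1; unfold sumR in *; simpl; [ring | rewrite IHl1; ring]. Qed.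

Lemma sumR_ext {A} (l : list A) F G :
  (forall x, In x l -> F x = G x) -> sumR l F = sumR l G.
Proof. intros H; unfold sumR; f_equal; apply map_ext_in; auto. Qed.

Lemma sumR_le {A} (l : list A) F G :
  (forall x, In x l -> F x <= G x) -> sumR l F <= sumR l G.
Proof.
  induction l as [|a l IH]; unfold sumR in *; simpl; intros H; [lra|].
  pose proof (H a (or_introl eq_refl)). pose proof (IH (fun x Hx => H x (or_intror Hx))). lra.
Qed.

Lemma sumR_nonneg {A} (l : list A) F : (forall x, In x l -> 0 <= F x) -> 0 <= sumR l F.
Proof.
  induction l as [|a l IH]; unfold sumR in *; simpl; intros H; [lra|].
  pose proof (H a (or_introl eq_refl)). pose proof (IH (fun x Hx => H x (or_intror Hx))). lra.
Qed.

Lemma sumR_seq_shift x k n (F : nat -> R) :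
  sumR (seq (x + k) n) F = sumR (seq k n) (fun y => F (x + y)%nat).
Proof.
  revert k; induction n; intros k; unfold sumR in *; simpl; auto.
  rewrite <- IHn. replace (S (x + k)) with (x + S k)%nat by lia. reflexivity.
Qed.

Lemma sumR_seq_tail (F : nat -> R) x n : (forall z, 0 <= F z) ->
  sumR (seq (S x) n) F <= sumR (seq 1 (x + n)) F.
Proof.
  intros H. rewrite seq_app, sumR_app. replace (1 + x)%nat with (S x) by lia.
  pose proof (sumR_nonneg (seq 1 x) F (fun z _ => H z)). lra.
Qed.

Lemma sum_flat (h : list bool -> R) l :
  fold_right Rplus 0 (map h (flat_map (fun s => [true :: s; false :: s]) l)) =
  fold_right Rplus 0 (map (fun s => h (true :: s) + h (false :: s)) l).
Proof. induction l; simpl; [ring | rewrite IHl; ring]. Qed.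

Lemma mu_0 q f : mu q 0 f = f [].
Proof. unfold mu; simpl; ring. Qed.

Lemma mu_S q L f :
  mu q (S L) f = mu q L (fun s => (1 - q) * f (true :: s) + q * f (false :: s)).
Proof.
  unfold mu; simpl configs. rewrite sum_flat. f_equal. apply map_ext; intros; simpl; ring.
Qed.

Lemma mu_ext q L f g : (forall s, length s = L -> f s = g s) -> mu q L f = mu q L g.
Proof.
  revert f g; induction L; intros f g H.
  - rewrite !mu_0; apply H; reflexivity.
  - rewrite !mu_S; apply IHL; intros s Hs; rewrite !H; simpl; auto.
Qed.

Lemma mu_plus q L f g : mu q L (fun s => f s + g s) = mu q L f + mu q L g.
Proof.
  revert f g; induction L; intros f g.
  - rewrite !mu_0; ring.
  - rewrite !mu_S, <- IHL. apply mu_ext; intros; ring.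
Qed.

Lemma mu_scal q L c f : mu q L (fun s => c * f s) = c * mu q L f.
Proof.
  revert f; induction L; intros f.
  - rewrite !mu_0; ring.
  - rewrite !mu_S, <- IHL. apply mu_ext; intros; ring.
Qed.

Lemma mu_minus q L f g : mu q L (fun s => f s - g s) = mu q L f - mu q L g.
Proof.
  transitivity (mu q L (fun s => f s + (-1) * g s)); [apply mu_ext; intros; ring|].
  rewrite mu_plus, mu_scal; ring.
Qed.

Lemma mu_opp q L f : mu q L (fun s => - f s) = - mu q L f.
Proof.
  rewrite <- (Rmult_1_l (mu q L f)), Ropp_mult_distr_l, <- mu_scal. apply mu_ext; intros; ring.
Qed.

Lemma mu_const q L c : mu q L (fun _ => c) = c.
Proof.
  induction L; [now rewrite mu_0|].
  rewrite mu_S. transitivity (mu q L (fun _ => c)); [apply mu_ext; intros; ring | exact IHL].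
Qed.

Lemma mu_sumR {A} q L (l : list A) F :
  mu q L (fun s => sumR l (fun x => F x s)) = sumR l (fun x => mu q L (F x)).
Proof.
  induction l; unfold sumR in *; simpl; [apply mu_const | now rewrite mu_plus, IHl].
Qed.

Lemma mu_le q L f g : 0 <= q <= 1 ->
  (forall s, length s = L -> f s <= g s) -> mu q L f <= mu q L g.
Proof.
  intros Hq; revert f g; induction L; intros f g H.
  - rewrite !mu_0; apply H; reflexivity.
  - rewrite !mu_S; apply IHL; intros s Hs.
    assert (f (true :: s) <= g (true :: s)) by (apply H; simpl; auto).
    assert (f (false :: s) <= g (false :: s)) by (apply H; simpl; auto).
    nra.
Qed.

Lemma mu_nonneg q L h : 0 <= q <= 1 -> (forall s, 0 <= h s) -> 0 <= mu q L h.
Proof. intros. rewrite <- (mu_const q L 0). apply mu_le; auto. Qed.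

Lemma mu_split q m n F : mu q (m + n) F = mu q m (fun u => mu q n (fun t => F (u ++ t))).
Proof.
  revert F; induction m; intros F.
  - now rewrite mu_0.
  - simpl (S m + n)%nat. rewrite !mu_S, IHm. apply mu_ext; intros u _.
    now rewrite <- !mu_scal, <- mu_plus.
Qed.

Lemma mu_swap q m n (H : list bool -> list bool -> R) :
  mu q m (fun u => mu q n (fun t => H u t)) = mu q n (fun t => mu q m (fun u => H u t)).
Proof.
  revert H; induction m; intros H.
  - rewrite mu_0. apply mu_ext; intros; now rewrite mu_0.
  - rewrite mu_S.
    transitivity (mu q m (fun u =>
      mu q n (fun t => (1 - q) * H (true :: u) t + q * H (false :: u) t))).
    + apply mu_ext; intros. now rewrite mu_plus, !mu_scal.
    + rewrite IHm. apply mu_ext; intros. now rewrite mu_S.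
Qed.

Lemma mu_split' q m n F : mu q (m + n) F = mu q n (fun t => mu q m (fun u => F (u ++ t))).
Proof. now rewrite mu_split, mu_swap. Qed.

Lemma mu_prefix q x L (phi : list bool -> R) h : (x <= L)%nat ->
  (forall u t, length u = x -> phi (u ++ t) = phi u) ->
  mu q x (fun u => phi u * mu q (L - x) (fun t => h (u ++ t))) = mu q L (fun s => phi s * h s).
Proof.
  intros HL Hphi. assert (HL' : L = (x + (L - x))%nat) by lia.
  set (n := (L - x)%nat) in *. rewrite HL', mu_split.
  apply mu_ext; intros u Hu. rewrite <- mu_scal. apply mu_ext; intros t _. now rewrite Hphi.
Qed.

Lemma mu_skipn q m n H : mu q (m + n) (fun t => H (skipn m t)) = mu q n H.
Proof.
  rewrite mu_split, <- (mu_const q m (mu q n H)). apply mu_ext; intros u Hu.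
  apply mu_ext; intros t _. rewrite skipn_app, <- Hu, Nat.sub_diag, skipn_all. reflexivity.
Qed.

Lemma nth_set_other s i j b d : i <> j -> nth j (set_nth_b s i b) d = nth j s d.
Proof.
  revert i j; induction s; intros i j H; simpl; auto.
  destruct i, j; simpl; auto. congruence.
Qed.

Lemma set_set s i b c : set_nth_b (set_nth_b s i b) i c = set_nth_b s i c.
Proof. revert i; induction s; intros [|i]; simpl; auto; now rewrite IHs. Qed.

Lemma site_app_l u t y : (1 <= y <= length u)%nat -> site (u ++ t) y = site u y.
Proof. intros H; unfold site. apply app_nth1. lia. Qed.

Lemma site_app_r u t y : (1 <= y)%nat -> site (u ++ t) (length u + y) = site t y.
Proof. intros H; unfold site. rewrite app_nth2 by lia. f_equal. lia. Qed.

Lemma set_site_app_l u t y b : (1 <= y <= length u)%nat ->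
  set_site (u ++ t) y b = set_site u y b ++ t.
Proof.
  intros H; unfold set_site. assert (Hy : (y - 1 < length u)%nat) by lia. revert Hy.
  generalize (y - 1)%nat. clear H.
  induction u as [|a u IH]; intros [|i] Hi; simpl in *; try lia; auto. rewrite IH; auto; lia.
Qed.

Lemma set_site_app_r u t y b : (1 <= y)%nat ->
  set_site (u ++ t) (length u + y) b = u ++ set_site t y b.
Proof.
  intros H; unfold set_site. replace (length u + y - 1)%nat with (length u + (y - 1))%nat by lia.
  induction u; simpl; auto. now rewrite IHu.
Qed.

Lemma constr_01 s x : 0 <= constr s x <= 1.
Proof. destruct x as [|[|y]]; simpl; try lra. destruct (site s (S y)); lra. Qed.

Lemma constr_set s x b : constr (set_site s x b) x = constr s x.
Proof.
  destruct x as [|[|y]]; simpl; auto. unfold site, set_site.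
  replace (S (S y) - 1)%nat with (S y) by lia. replace (S y - 1)%nat with y by lia.
  now rewrite nth_set_other by lia.
Qed.

Lemma constr_app_l u t y : (1 <= y <= length u)%nat -> constr (u ++ t) y = constr u y.
Proof. intros H. destruct y as [|[|y]]; simpl; auto. rewrite site_app_l by lia. reflexivity. Qed.

(* Behind an empty site at position |u|, the East constraints on the right of u
   are those of the East process on the remaining sites (with free boundary). *)
Lemma constr_app_r u t y : (1 <= length u)%nat -> site u (length u) = false -> (1 <= y)%nat ->
  constr (u ++ t) (length u + y) = constr t y.
Proof.
  intros H1 H2 H3. destruct y as [|[|y]]; [lia| |].
  - replace (length u + 1)%nat with (S (S (length u - 1))) by lia. simpl.
    replace (S (length u - 1)) with (length u) by lia.
    now rewrite site_app_l, H2 by lia.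
  - replace (length u + S (S y))%nat with (S (S (length u + y))) by lia. simpl.
    replace (S (length u + y)) with (length u + S y)%nat by lia.
    now rewrite site_app_r by lia.
Qed.

(** ** The Dirichlet form *)

(* mu is invariant under resampling the spin at a site x: this is the
   reversibility of each local move with respect to the product measure. *)
Lemma mu_pi q L x h : (1 <= x <= L)%nat -> mu q L h = mu q L (pi_x q x h).
Proof.
  revert x h; induction L; intros x h Hx; [lia|].
  destruct x as [|[|x']]; [lia| |].
  - rewrite !mu_S; apply mu_ext; intros s _; unfold pi_x, set_site; simpl. ring.
  - rewrite !mu_S.
    transitivity (mu q L (fun s => (1 - q) * pi_x q (S x') (fun s => h (true :: s)) s
                                 + q * pi_x q (S x') (fun s => h (false :: s)) s)).
    + rewrite !mu_plus, !mu_scal, <- !IHL by lia. reflexivity.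
    + apply mu_ext; intros s _. unfold pi_x, set_site; simpl.
      now replace (x' - 0)%nat with x' by lia.
Qed.

Lemma pi_set q x f s b : pi_x q x f (set_site s x b) = pi_x q x f s.
Proof. unfold pi_x, set_site. now rewrite !set_set. Qed.

(* The variance of f when the spin at x is resampled: pi_x(f^2) - (pi_x f)^2. *)
Definition local_var q x (f : list bool -> R) s :=
  q * (1 - q) * (f (set_site s x true) - f (set_site s x false)) ^ 2.

Definition local_dir q x f s := constr s x * local_var q x f s.
Definition energy q L f s := sumR (seq 1 L) (fun x => local_dir q x f s).
Definition dirichlet q L f := mu q L (energy q L f).

Lemma dirichlet_sites q L f :
  dirichlet q L f = sumR (seq 1 L) (fun x => mu q L (local_dir q x f)).
Proof. apply mu_sumR. Qed.

Lemma Dir_dirichlet q L f : Dir q L f = dirichlet q L f.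
Proof.
  unfold Dir, gen. rewrite dirichlet_sites, <- mu_opp.
  transitivity (mu q L (fun s => sumR (seq 1 L)
                  (fun x => - (f s * (constr s x * (pi_x q x f s - f s)))))).
  - apply mu_ext; intros s _. rewrite sumR_opp, sumR_scal. reflexivity.
  - rewrite mu_sumR. apply sumR_ext. intros x Hx. apply in_seq in Hx.
    rewrite (mu_pi q L x) by lia. apply mu_ext; intros s _.
    unfold pi_x at 1. rewrite !constr_set, !pi_set. unfold local_dir, local_var, pi_x. ring.
Qed.

Lemma local_dir_nonneg q x f s : 0 <= q <= 1 -> 0 <= local_dir q x f s.
Proof.
  intros Hq. unfold local_dir, local_var. pose proof (constr_01 s x).
  apply Rmult_le_pos; [lra|]. apply Rmult_le_pos; [nra | apply pow2_ge_0].
Qed.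

Lemma energy_nonneg q L f s : 0 <= q <= 1 -> 0 <= energy q L f s.
Proof. intros Hq. apply sumR_nonneg; intros; now apply local_dir_nonneg. Qed.

Lemma dirichlet_nonneg q L f : 0 <= q <= 1 -> 0 <= dirichlet q L f.
Proof. intros Hq. apply mu_nonneg; auto; intros; now apply energy_nonneg. Qed.

Lemma Var_alt q L f : Var q L f = mu q L (fun s => (f s - mu q L f) ^ 2).
Proof.
  unfold Var. set (m := mu q L f).
  transitivity (mu q L (fun s => f s * f s + (-2 * m) * f s + m * m)).
  - rewrite !mu_plus, mu_scal, mu_const. fold m. ring.
  - apply mu_ext; intros; ring.
Qed.

Lemma Var_le_dev q L f c : Var q L f <= mu q L (fun s => (f s - c) ^ 2).
Proof.
  unfold Var. set (m := mu q L f).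
  replace (mu q L (fun s => (f s - c) ^ 2))
    with (mu q L (fun s => f s * f s + (-2 * c) * f s + c * c)) by (apply mu_ext; intros; ring).
  rewrite !mu_plus, mu_scal, mu_const. fold m. pose proof (pow2_ge_0 (m - c)). nra.
Qed.

Lemma Var_nonneg q L f : 0 <= q <= 1 -> 0 <= Var q L f.
Proof. intros Hq. rewrite Var_alt. apply mu_nonneg; auto; intros; apply pow2_ge_0. Qed.

Lemma Var_triangle q L f g : 0 <= q <= 1 ->
  Var q L f <= 2 * Var q L g + 2 * mu q L (fun s => (f s - g s) ^ 2).
Proof.
  intros Hq. eapply Rle_trans; [apply (Var_le_dev q L f (mu q L g))|].
  rewrite (Var_alt q L g), <- !mu_scal, <- mu_plus. apply mu_le; auto.
  intros s _. pose proof (pow2_ge_0 (f s - 2 * g s + mu q L g)). simpl. nra.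
Qed.

Lemma Var_skipn q m n H : Var q (m + n) (fun t => H (skipn m t)) = Var q n H.
Proof. unfold Var. now rewrite (mu_skipn q m n H), (mu_skipn q m n (fun t => H t * H t)). Qed.

Definition poincare q L T := forall f, Var q L f <= T * dirichlet q L f.

Definition poincare_upto q N T := forall n, (n <= N)%nat -> poincare q n T.

Lemma energy_left_block q f u t : 0 <= q <= 1 ->
  energy q (length u) (fun u' => f (u' ++ t)) u <= energy q (length u + length t) f (u ++ t).
Proof.
  intros Hq. unfold energy. rewrite seq_app, sumR_app.
  assert (0 <= sumR (seq (1 + length u) (length t)) (fun x => local_dir q x f (u ++ t)))
    by (apply sumR_nonneg; intros; now apply local_dir_nonneg).
  enough (E : sumR (seq 1 (length u)) (fun x => local_dir q x (fun u' => f (u' ++ t)) u)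
            = sumR (seq 1 (length u)) (fun x => local_dir q x f (u ++ t))) by lra.
  apply sumR_ext; intros y Hy. apply in_seq in Hy.
  unfold local_dir, local_var. now rewrite constr_app_l, !set_site_app_l by lia.
Qed.

Lemma energy_right_block q f u t : 0 <= q <= 1 ->
  (1 <= length u)%nat -> site u (length u) = false ->
  energy q (length t) (fun t' => f (u ++ t')) t <= energy q (length u + length t) f (u ++ t).
Proof.
  intros Hq Hu Hs. unfold energy.
  eapply Rle_trans; [| apply sumR_seq_tail; intros; now apply local_dir_nonneg].
  replace (S (length u)) with (length u + 1)%nat by lia. rewrite sumR_seq_shift.
  apply Req_le, sumR_ext; intros y Hy. apply in_seq in Hy.
  unfold local_dir, local_var. rewrite constr_app_r, !set_site_app_r by (auto; lia). reflexivity.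
Qed.

Lemma dirichlet_left_block q a n f : 0 <= q <= 1 ->
  mu q n (fun t => dirichlet q a (fun u => f (u ++ t))) <= dirichlet q (a + n) f.
Proof.
  intros Hq. unfold dirichlet. rewrite mu_split'. apply mu_le; auto; intros t Ht.
  apply mu_le; auto; intros u Hu. subst a n. now apply energy_left_block.
Qed.

(** ** The first empty site in a window *)

Definition indb (b : bool) : R := if b then 1 else 0.

Lemma indb_nonneg b : 0 <= indb b.
Proof. destruct b; simpl; lra. Qed.

Definition window_full s d (sg : list bool) : bool := forallb (site sg) (seq (S s) d).

Definition first_zero s x (sg : list bool) : bool :=
  negb (site sg x) && window_full s (x - S s) sg.

Lemma forallb_ext_in {A} (f g : A -> bool) l :
  (forall y, In y l -> f y = g y) -> forallb f l = forallb g l.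
Proof. induction l; simpl; intros H; auto. rewrite H, IHl; auto. Qed.

Lemma first_zero_app s u t : (S s <= length u)%nat ->
  first_zero s (length u) (u ++ t) = first_zero s (length u) u.
Proof.
  intros H. unfold first_zero, window_full. rewrite site_app_l by lia. f_equal.
  apply forallb_ext_in. intros y Hy. apply in_seq in Hy. apply site_app_l. lia.
Qed.

Lemma first_zero_empty s u : first_zero s (length u) u = true -> site u (length u) = false.
Proof. unfold first_zero. now destruct (site u (length u)). Qed.

Lemma sum_first_zero_gen s sg k m : (S s <= m)%nat ->
  sumR (seq m k) (fun x => indb (first_zero s x sg)) =
  indb (window_full s (m - S s) sg) * (1 - indb (forallb (site sg) (seq m k))).
Proof.
  revert m; induction k; intros m Hm.
  - unfold sumR; simpl. ring.
  - change (seq m (S k)) with (m :: seq (S m) k).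
    unfold sumR; simpl. fold (sumR (seq (S m) k) (fun x => indb (first_zero s x sg))).
    rewrite IHk by lia. unfold first_zero, window_full.
    replace (S m - S s)%nat with (S (m - S s)) by lia.
    rewrite seq_S, forallb_app. replace (S s + (m - S s))%nat with m by lia. simpl.
    destruct (site sg m), (forallb (site sg) (seq (S s) (m - S s))),
      (forallb (site sg) (seq (S m) k)); simpl; ring.
Qed.

Lemma sum_first_zero s d sg :
  sumR (seq (S s) d) (fun x => indb (first_zero s x sg)) = 1 - indb (window_full s d sg).
Proof. rewrite sum_first_zero_gen, Nat.sub_diag by lia. unfold window_full; simpl. ring. Qed.

Lemma window_full_cons b sg k d :
  window_full (S k) d (b :: sg) = window_full k d sg.
Proof.
  unfold window_full. revert k; induction d; intros k; simpl; auto.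
  rewrite IHd. unfold site; simpl. now rewrite Nat.sub_0_r.
Qed.

Lemma mu_window_full q L s d : (s + d <= L)%nat ->
  mu q L (fun sg => indb (window_full s d sg)) = (1 - q) ^ d.
Proof.
  revert s d; induction L; intros s d H.
  - replace d with 0%nat by lia. now rewrite mu_0.
  - rewrite mu_S. destruct s as [|s'].
    + destruct d as [|d'].
      * simpl pow. transitivity (mu q L (fun _ => 1)); [|apply mu_const].
        apply mu_ext; intros; unfold indb, window_full; simpl; ring.
      * simpl pow. rewrite <- (IHL 0%nat d'), <- mu_scal by lia.
        apply mu_ext; intros sg _. unfold window_full.
        change (seq 1 (S d')) with (1%nat :: seq 2 d'). simpl forallb.
        fold (window_full 1 d' (true :: sg)) (window_full 1 d' (false :: sg)).
        rewrite !window_full_cons. unfold window_full, indb at 2; simpl. ring.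
    + rewrite <- (IHL s' d) by lia. apply mu_ext; intros sg _. rewrite !window_full_cons. ring.
Qed.

Lemma first_zero_decomp q L s d h : (s + d <= L)%nat ->
  sumR (seq (S s) d) (fun x =>
    mu q x (fun u => indb (first_zero s x u) * mu q (L - x) (fun t => h (u ++ t))))
  = mu q L (fun sg => (1 - indb (window_full s d sg)) * h sg).
Proof.
  intros Hsd.
  transitivity (sumR (seq (S s) d) (fun x => mu q L (fun sg => indb (first_zero s x sg) * h sg))).
  - apply sumR_ext; intros x Hx. apply in_seq in Hx. apply mu_prefix; [lia|].
    intros u t Hu. subst x. now rewrite first_zero_app by lia.
  - rewrite <- mu_sumR. apply mu_ext; intros sg _.
    rewrite <- sum_first_zero, Rmult_comm, <- sumR_scal. apply sumR_ext; intros; ring.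
Qed.

(* For nonnegative h, the decomposition undercounts the configurations with a
   full window. *)
Lemma first_zero_decomp_le q L s d h : 0 <= q <= 1 -> (s + d <= L)%nat -> (forall sg, 0 <= h sg) ->
  sumR (seq (S s) d) (fun x =>
    mu q x (fun u => indb (first_zero s x u) * mu q (L - x) (fun t => h (u ++ t))))
  <= mu q L h.
Proof.
  intros Hq Hsd Hh. rewrite first_zero_decomp by auto. apply mu_le; auto; intros sg _.
  pose proof (indb_nonneg (window_full s d sg)). pose proof (Hh sg). nra.
Qed.

Lemma first_zero_decomp_const q L s d c : (s + d <= L)%nat ->
  sumR (seq (S s) d) (fun x => mu q x (fun u => indb (first_zero s x u) * c))
  = (1 - (1 - q) ^ d) * c.
Proof.
  intros Hsd.
  transitivity (sumR (seq (S s) d) (fun x =>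
    mu q x (fun u => indb (first_zero s x u) * mu q (L - x) (fun _ => c)))).
  { apply sumR_ext; intros; apply mu_ext; intros; now rewrite mu_const. }
  rewrite (first_zero_decomp q L s d (fun _ => c)) by auto.
  transitivity (mu q L (fun sg => c - c * indb (window_full s d sg)));
    [apply mu_ext; intros; ring|].
  rewrite mu_minus, mu_scal, mu_window_full, mu_const by auto. ring.
Qed.

(** ** The bisection step *)

Definition block_mean q a (f : list bool -> R) t := mu q a (fun u => f (u ++ t)).

Lemma Var_block_decomp q a n f :
  Var q (a + n) f = mu q n (fun t => Var q a (fun u => f (u ++ t))) + Var q n (block_mean q a f).
Proof.
  unfold Var at 1 3. rewrite !mu_split'. unfold Var. rewrite mu_minus. unfold block_mean. ring.
Qed.

Lemma block_mean_dev q a n f :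
  mu q (a + n) (fun sg => (f sg - block_mean q a f (skipn a sg)) ^ 2)
  = mu q n (fun t => Var q a (fun u => f (u ++ t))).
Proof.
  rewrite mu_split'. apply mu_ext; intros t _. rewrite Var_alt.
  apply mu_ext; intros u Hu. rewrite skipn_app, <- Hu, skipn_all, Nat.sub_diag. reflexivity.
Qed.

Lemma left_block_var_bound q a n f T : 0 <= q <= 1 -> 0 <= T -> poincare q a T ->
  mu q n (fun t => Var q a (fun u => f (u ++ t))) <= T * dirichlet q (a + n) f.
Proof.
  intros Hq HT HP. eapply Rle_trans.
  - apply (mu_le q n _ (fun t => T * dirichlet q a (fun u => f (u ++ t)))); auto.
  - rewrite mu_scal. apply Rmult_le_compat_l; auto. now apply dirichlet_left_block.
Qed.

Lemma block_mean_var_cond q a n f u : (length u <= a)%nat ->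
  Var q (a + n - length u) (fun t => block_mean q a f (skipn a (u ++ t)))
  = Var q n (block_mean q a f).
Proof.
  intros Hu. replace (a + n - length u)%nat with ((a - length u) + n)%nat by lia.
  rewrite <- (Var_skipn q (a - length u) n). unfold Var. f_equal; [|f_equal];
    apply mu_ext; intros t _; now rewrite skipn_app, skipn_all2 by lia.
Qed.

Lemma right_block_var_bound q L x T f u : 0 <= q <= 1 -> 0 <= T ->
  (1 <= x <= L)%nat -> length u = x -> site u x = false -> poincare q (L - x) T ->
  Var q (L - x) (fun t => f (u ++ t)) <= T * mu q (L - x) (fun t => energy q L f (u ++ t)).
Proof.
  intros Hq HT Hx Hu Hs HP. eapply Rle_trans; [apply HP|].
  apply Rmult_le_compat_l; auto. apply mu_le; auto; intros t Ht.
  subst x. rewrite <- Ht. replace L with (length u + length t)%nat by lia.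
  apply energy_right_block; auto. lia.
Qed.

(* Given the first x sites u, with x the first empty site of the window
   {a-d+1,...,a}: the last a+n-x <= a sites form an East process on which T
   applies, and the left-block mean g keeps its full variance there, so that
   Var g <= 2 Var(f(u ++ .)) + 2 mu((f - g)^2) is controlled by the energy. *)
Lemma conditional_mean_var_bound q a n d T f u : 0 <= q <= 1 -> 0 <= T ->
  (1 <= d <= a)%nat -> (n <= a - d + 1)%nat -> poincare_upto q a T ->
  (a - d < length u <= a)%nat -> first_zero (a - d) (length u) u = true ->
  Var q n (block_mean q a f)
  <= mu q (a + n - length u) (fun t => 2 * T * energy q (a + n) f (u ++ t)
                              + 2 * (f (u ++ t) - block_mean q a f (skipn a (u ++ t))) ^ 2).
Proof.
  intros Hq HT Hd Hn HP Hu HE.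
  rewrite <- (block_mean_var_cond q a n f u) by lia.
  eapply Rle_trans; [apply (Var_triangle q _ _ (fun t => f (u ++ t)) Hq)|].
  rewrite mu_plus, !mu_scal.
  pose proof (right_block_var_bound q (a + n) (length u) T f u Hq HT ltac:(lia) eq_refl
                (first_zero_empty _ u HE) (HP (a + n - length u)%nat ltac:(lia))).
  replace (mu q (a + n - length u)
             (fun t => (block_mean q a f (skipn a (u ++ t)) - f (u ++ t)) ^ 2))
    with (mu q (a + n - length u) (fun t => (f (u ++ t) - block_mean q a f (skipn a (u ++ t))) ^ 2))
    by (apply mu_ext; intros; ring).
  lra.
Qed.

(* Averaging over the first empty site x of the window, which exists with
   probability 1 - p^d. *)
Lemma block_mean_var_bound q a n d T f : 0 <= q <= 1 -> 0 <= T ->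
  (1 <= d <= a)%nat -> (n <= a - d + 1)%nat -> poincare_upto q a T ->
  (1 - (1 - q) ^ d) * Var q n (block_mean q a f)
  <= 2 * T * dirichlet q (a + n) f + 2 * mu q n (fun t => Var q a (fun u => f (u ++ t))).
Proof.
  intros Hq HT Hd Hn HP.
  set (g := fun sg => block_mean q a f (skipn a sg)).
  rewrite <- block_mean_dev. fold g. unfold dirichlet.
  rewrite <- (first_zero_decomp_const q (a + n) (a - d) d) by lia.
  transitivity (mu q (a + n) (fun sg => 2 * T * energy q (a + n) f sg + 2 * (f sg - g sg) ^ 2)).
  2: { rewrite mu_plus, !mu_scal. apply Req_le; reflexivity. }
  eapply Rle_trans; [| apply (first_zero_decomp_le q (a + n) (a - d) d); auto; [lia|]].
  - apply sumR_le; intros x Hx. apply in_seq in Hx. apply mu_le; auto; intros u Hu.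
    destruct (first_zero (a - d) x u) eqn:HE; simpl indb; [rewrite !Rmult_1_l | lra].
    subst x. apply (conditional_mean_var_bound q a n d); auto; lia.
  - intros sg. pose proof (energy_nonneg q (a + n) f sg Hq). pose proof (pow2_ge_0 (f sg - g sg)).
    nra.
Qed.

Lemma bisection q a n d T f : 0 < q < 1 -> 0 <= T ->
  (1 <= d <= a)%nat -> (n <= a - d + 1)%nat -> poincare_upto q a T ->
  (1 - (1 - q) ^ d) * Var q (a + n) f <= 5 * T * dirichlet q (a + n) f.
Proof.
  intros Hq HT Hd Hn HP.
  assert (Heps : 0 <= 1 - (1 - q) ^ d <= 1).
  { pose proof (pow_le (1 - q) d ltac:(lra)).
    pose proof (pow_lt_1_compat (1 - q) d ltac:(lra) ltac:(lia)). lra. }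
  pose proof (Var_block_decomp q a n f) as Hdec.
  pose proof (left_block_var_bound q a n f T ltac:(lra) HT (HP a (le_n a))) as Hleft.
  pose proof (block_mean_var_bound q a n d T f ltac:(lra) HT Hd Hn HP) as Hmean.
  pose proof (dirichlet_nonneg q (a + n) f ltac:(lra)).
  set (EA := mu q n (fun t => Var q a (fun u => f (u ++ t)))) in *.
  set (D := dirichlet q (a + n) f) in *.
  rewrite Hdec. assert (0 <= T * D) by nra. nra.
Qed.

Lemma poincare_mono q n T T' : 0 <= q <= 1 -> T <= T' -> poincare q n T -> poincare q n T'.
Proof.
  intros Hq HT H f. eapply Rle_trans; [apply H|].
  apply Rmult_le_compat_r; auto. now apply dirichlet_nonneg.
Qed.

Lemma poincare_upto_mono q N N' T T' : 0 <= q <= 1 -> (N' <= N)%nat -> T <= T' ->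
  poincare_upto q N T -> poincare_upto q N' T'.
Proof. intros Hq HN HT H n Hn. apply poincare_mono with T; auto. apply H; lia. Qed.

(* On at most one site, the unconstrained spin relaxes at rate 1. *)
Lemma poincare_upto_1 q : poincare_upto q 1 1.
Proof.
  intros [|[|n]] Hn f; [| |lia]; unfold Var, dirichlet, energy, sumR; simpl.
  - rewrite !mu_0. lra.
  - rewrite !mu_S, !mu_0. unfold local_dir, local_var, set_site. simpl. apply Req_le. ring.
Qed.

Lemma poincare_upto_step q a d T : 0 < q < 1 -> 0 <= T -> (1 <= d <= a)%nat ->
  poincare_upto q a T -> poincare_upto q (2 * a - d + 1) (5 / (1 - (1 - q) ^ d) * T).
Proof.
  intros Hq HT Hd HP n Hn.
  pose proof (pow_lt_1_compat (1 - q) d ltac:(lra) ltac:(lia)).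
  pose proof (pow_le (1 - q) d ltac:(lra)).
  set (eps := 1 - (1 - q) ^ d).
  assert (Heps : 0 < eps <= 1) by (unfold eps; lra).
  destruct (le_lt_dec n a) as [Hna|Hna].
  - apply poincare_mono with T; [lra| |now apply HP].
    assert (1 <= / eps) by (rewrite <- Rinv_1; apply Rinv_le_contravar; lra).
    unfold Rdiv. nra.
  - intros f. replace n with (a + (n - a))%nat by lia.
    apply Rmult_le_reg_l with eps; [lra|].
    replace (eps * (5 / eps * T * dirichlet q (a + (n - a)) f))
      with (5 * T * dirichlet q (a + (n - a)) f) by (field; lra).
    exact (bisection q a (n - a) d T f Hq HT Hd ltac:(lia) HP).
Qed.

(* Two bisection steps from length 1 reach length 3 (indeed 4). *)
Lemma poincare_upto_3 q : 0 < q < 1 -> poincare_upto q 3 (25 / q ^ 2).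
Proof.
  intros Hq.
  assert (E : 1 - (1 - q) ^ 1 = q) by ring.
  pose proof (poincare_upto_step q 1 1 1 Hq ltac:(lra) ltac:(lia) (poincare_upto_1 q)) as H2.
  rewrite E in H2.
  assert (0 <= 5 / q * 1) by (apply Rmult_le_pos; [apply Rlt_le, Rdiv_lt_0_compat|]; lra).
  pose proof (poincare_upto_step q 2 1 _ Hq H ltac:(lia) H2) as H4. rewrite E in H4.
  apply (poincare_upto_mono q 4 3 (5 / q * (5 / q * 1)) _ ltac:(lra) ltac:(lia)); [|exact H4].
  apply Req_le. field. lra.
Qed.

Lemma gap_bound q L T g : 0 < q < 1 -> 0 < T -> poincare q L T -> is_spectral_gap q L g -> / g <= T.
Proof.
  intros Hq HT HP [_ Hglb].
  assert (H : / T <= g).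
  { apply Hglb. intros t [f [HV Ht]]. subst t. rewrite Dir_dirichlet.
    pose proof (Var_nonneg q L f ltac:(lra)). pose proof (HP f).
    apply Rmult_le_reg_l with T; auto. rewrite Rinv_r by lra.
    apply Rmult_le_reg_r with (Var q L f); [lra|].
    replace (T * (dirichlet q L f / Var q L f) * Var q L f) with (T * dirichlet q L f)
      by (field; lra).
    lra. }
  rewrite <- (Rinv_inv T). apply Rinv_le_contravar; auto. apply Rinv_0_lt_compat; auto.
Qed.

(** ** The lengths ell_i *)

Lemma ell_S r i : (1 <= i)%nat -> ell r (S i) = (2 * ell r i - (ell r i + r - 1) / r)%nat.
Proof. intros H. now destruct i. Qed.

Lemma ceil_div_bounds a r : (1 <= a)%nat -> (1 <= r)%nat ->
  (a <= r * ((a + r - 1) / r) <= a + r - 1)%nat /\ (1 <= (a + r - 1) / r <= a)%nat.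
Proof.
  intros Ha Hr. pose proof (Nat.div_mod (a + r - 1) r ltac:(lia)).
  pose proof (Nat.mod_upper_bound (a + r - 1) r ltac:(lia)). nia.
Qed.

Lemma ell_ge3 r i : (1 <= r)%nat -> (3 <= ell r i)%nat.
Proof.
  intros Hr. induction i as [|[|j] IH]; [simpl; lia | simpl; lia|].
  rewrite ell_S by lia. pose proof (ceil_div_bounds (ell r (S j)) r ltac:(lia) Hr). nia.
Qed.

(* ell_i <= 3 2^(i-1): each step at most doubles the length. *)
Lemma ell_upper r i : (1 <= r)%nat -> (1 <= i)%nat -> INR (ell r i) <= 3 * 2 ^ (i - 1).
Proof.
  intros Hr Hi. induction i as [|[|j] IH]; [lia | simpl; lra|].
  rewrite ell_S by lia. replace (S (S j) - 1)%nat with (S j) by lia. simpl pow.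
  specialize (IH ltac:(lia)). replace (S j - 1)%nat with j in IH by lia.
  assert (HH : (2 * ell r (S j) - (ell r (S j) + r - 1) / r <= 2 * ell r (S j))%nat) by lia.
  apply le_INR in HH. rewrite mult_INR in HH. simpl (INR 2) in HH. lra.
Qed.

Lemma ell_lower_geom r i : (1 <= r)%nat -> (1 <= i)%nat ->
  2 * (2 - 1 / INR r) ^ (i - 1) <= INR (ell r i) - 1.
Proof.
  intros Hr Hi. assert (HR : 1 <= INR r) by (apply (le_INR 1); lia).
  induction i as [|[|j] IH]; [lia | simpl; lra|].
  specialize (IH ltac:(lia)).
  set (a := ell r (S j)) in *. pose proof (ell_ge3 r (S j) Hr) as Ha. fold a in Ha.
  rewrite ell_S by lia. fold a.
  destruct (ceil_div_bounds a r ltac:(lia) Hr) as [[_ H2] H3].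
  set (x := ((a + r - 1) / r)%nat) in *.
  rewrite minus_INR, mult_INR by lia. simpl (INR 2).
  apply le_INR in H2. rewrite mult_INR, minus_INR, plus_INR in H2 by lia. simpl (INR 1) in H2.
  replace (S (S j) - 1)%nat with (S j) by lia. replace (S j - 1)%nat with j in IH by lia. simpl pow.
  assert (HX : INR x <= (INR a + INR r - 1) / INR r).
  { apply Rmult_le_reg_l with (INR r); [lra|]. field_simplify; lra. }
  assert (E : 2 * INR a - (INR a + INR r - 1) / INR r - 1 = (2 - 1 / INR r) * (INR a - 1))
    by (field; lra).
  assert (0 <= 2 - 1 / INR r).
  { assert (1 / INR r <= 1)
      by (apply Rmult_le_reg_l with (INR r); [lra|]; field_simplify; lra).
    lra. }
  assert ((2 - 1 / INR r) * (2 * (2 - 1 / INR r) ^ j) <= (2 - 1 / INR r) * (INR a - 1))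
    by (apply Rmult_le_compat_l; lra).
  lra.
Qed.

Lemma bernoulli x n : 0 <= x <= 1 -> 1 - INR n * x <= (1 - x) ^ n.
Proof.
  intros H. induction n; [simpl; lra|]. rewrite S_INR. simpl pow.
  pose proof (pos_INR n). pose proof (pow_le (1 - x) n ltac:(lra)). nra.
Qed.

Lemma ell_lower r i : (1 <= r)%nat -> (1 <= i <= S r)%nat -> 2 ^ (i - 1) <= INR (ell r i).
Proof.
  intros Hr Hi. pose proof (ell_lower_geom r i Hr ltac:(lia)) as H.
  assert (HR : 1 <= INR r) by (apply (le_INR 1); lia).
  assert (Hx : 0 <= 1 / (2 * INR r) <= 1).
  { split; [apply Rlt_le, Rdiv_lt_0_compat; lra|].
    apply Rmult_le_reg_l with (2 * INR r); [lra|]. field_simplify; lra. }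
  pose proof (bernoulli _ (i - 1) Hx) as Hb.
  assert (Hi1 : INR (i - 1) * (1 / (2 * INR r)) <= 1 / 2).
  { assert (Hir : (i - 1 <= r)%nat) by lia. apply le_INR in Hir.
    replace (INR (i - 1) * (1 / (2 * INR r))) with (INR (i - 1) / INR r * (1 / 2)) by (field; lra).
    assert (INR (i - 1) / INR r <= 1)
      by (apply Rmult_le_reg_l with (INR r); [lra|]; field_simplify; lra).
    lra. }
  replace (2 - 1 / INR r) with (2 * (1 - 1 / (2 * INR r))) in H by (field; lra).
  rewrite Rpow_mult_distr in H.
  pose proof (pow_lt 2 (i - 1) ltac:(lra)).
  assert (2 ^ (i - 1) * (1 / 2) <= 2 ^ (i - 1) * (1 - 1 / (2 * INR r)) ^ (i - 1))
    by (apply Rmult_le_compat_l; lra).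
  lra.
Qed.

(* The factor by which the relaxation-time bound may grow at each step,
   up to the gain 2^-i of step i. *)
Definition growth q D r := 10 * (1 + 3 * D) * INR r / q.

(* p^n <= 1 / (1 + q n), so that 1 - p^n >= q n / (1 + q n). *)
Lemma pow_compl_le q n : 0 <= q <= 1 -> (1 - q) ^ n * (1 + q * INR n) <= 1.
Proof.
  intros H. induction n; [simpl; lra|]. rewrite S_INR. simpl pow.
  pose proof (pow_le (1 - q) n ltac:(lra)). pose proof (pos_INR n).
  assert (0 <= (1 - q) ^ n * (q * q * INR n + q * q)) by (apply Rmult_le_pos; nra).
  nra.
Qed.

(* Step i uses the window d = ceil(ell_i / r) >= 2^(i-1) / r, whose empty site
   has probability at least q d / (1 + 3 D), since q d <= q ell_i <= 3 D. *)
Lemma step_factor q D r i : 0 < q < 1 -> (1 <= r)%nat -> (1 <= i <= r)%nat -> q * 2 ^ r <= D ->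
  5 / (1 - (1 - q) ^ ((ell r i + r - 1) / r)) <= growth q D r / 2 ^ i.
Proof.
  intros Hq Hr Hi HD.
  set (a := ell r i). pose proof (ell_ge3 r i Hr) as Ha. fold a in Ha.
  destruct (ceil_div_bounds a r ltac:(lia) Hr) as [[H1 _] H3].
  set (x := ((a + r - 1) / r)%nat) in *.
  set (X := INR x). set (RR := INR r).
  assert (HR : 1 <= RR) by (apply (le_INR 1); lia).
  assert (HX : 1 <= X) by (apply (le_INR 1); lia).
  assert (HaX : INR a <= RR * X) by (apply le_INR in H1; now rewrite mult_INR in H1).
  assert (HXa : X <= INR a) by (apply le_INR; lia).
  pose proof (ell_lower r i Hr ltac:(lia)) as Hlow. fold a in Hlow.
  assert (HqX : q * X <= 3 * D).
  { pose proof (ell_upper r i Hr ltac:(lia)). fold a in H.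
    pose proof (Rle_pow 2 (i - 1) r ltac:(lra) ltac:(lia)). nra. }
  pose proof (pow_compl_le q x ltac:(lra)) as Hc. fold X in Hc.
  assert (Heps : q * X / (1 + 3 * D) <= 1 - (1 - q) ^ x).
  { apply Rle_trans with (q * X / (1 + q * X)).
    - apply Rmult_le_compat_l; [nra|]. apply Rinv_le_contravar; nra.
    - apply Rmult_le_reg_r with (1 + q * X); [nra|]. field_simplify; nra. }
  assert (Hpos : 0 < q * X / (1 + 3 * D)) by (apply Rdiv_lt_0_compat; nra).
  pose proof (pow_lt 2 (i - 1) ltac:(lra)).
  replace (2 ^ i) with (2 * 2 ^ (i - 1)) by (rewrite tech_pow_Rmult; f_equal; lia).
  apply Rle_trans with (5 / (q * X / (1 + 3 * D))).
  { apply Rmult_le_compat_l; [lra|]. apply Rinv_le_contravar; lra. }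
  unfold growth. fold RR.
  apply Rmult_le_reg_r with (q * X * (2 * 2 ^ (i - 1))); [repeat apply Rmult_lt_0_compat; lra|].
  assert (0 < D) by (pose proof (pow_lt 2 r ltac:(lra)); nra).
  field_simplify; [nra | split; lra | repeat split; lra].
Qed.

(* The bound reached after j steps: 25/q^2 * K^j / 2^(1 + 2 + ... + j). *)
Definition step_bound q K j := 25 / q ^ 2 * K ^ j / 2 ^ (S j * j / 2).

Lemma step_bound_S q K j : q <> 0 ->
  step_bound q K (S j) = step_bound q K j * (K / 2 ^ S j).
Proof.
  intros Hq. unfold step_bound.
  replace (S (S j) * S j / 2)%nat with (S j * j / 2 + S j)%nat.
  - rewrite pow_add. simpl pow. field. repeat split; try assumption; apply pow_nonzero; lra.
  - replace (S (S j) * S j)%nat with (S j * j + S j * 2)%nat by lia. now rewrite Nat.div_add by lia.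
Qed.

Lemma step_bound_pos q K j : 0 < q -> 0 < K -> 0 < step_bound q K j.
Proof.
  intros Hq HK. unfold step_bound, Rdiv.
  repeat apply Rmult_lt_0_compat; try apply Rinv_0_lt_compat; try apply pow_lt; lra.
Qed.

Lemma growth_pos q D r : 0 < q -> 0 < D -> (1 <= r)%nat -> 0 < growth q D r.
Proof.
  intros Hq HD Hr. pose proof (lt_0_INR r ltac:(lia)). unfold growth, Rdiv.
  repeat apply Rmult_lt_0_compat; try apply Rinv_0_lt_compat; lra.
Qed.

Lemma ell_poincare q D r : 0 < q < 1 -> (1 <= r)%nat -> q * 2 ^ r <= D ->
  forall j, (S j <= r)%nat -> poincare_upto q (ell r (S j)) (step_bound q (growth q D r) j).
Proof.
  intros Hq Hr HD.
  assert (HK : 0 < growth q D r)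
    by (apply growth_pos; auto; pose proof (pow_lt 2 r ltac:(lra)); nra).
  induction j as [|j IH]; intros Hj.
  - apply (poincare_upto_mono q 3 3 (25 / q ^ 2)); auto; try lra; [|now apply poincare_upto_3].
    unfold step_bound; simpl. lra.
  - set (a := ell r (S j)). set (d := ((a + r - 1) / r)%nat).
    pose proof (ell_ge3 r (S j) Hr) as Ha. fold a in Ha.
    destruct (ceil_div_bounds a r ltac:(lia) Hr) as [_ Hd]. fold d in Hd.
    pose proof (step_bound_pos q (growth q D r) j ltac:(lra) HK).
    apply (poincare_upto_mono q (2 * a - d + 1) _
             (5 / (1 - (1 - q) ^ d) * step_bound q (growth q D r) j));
      [lra | rewrite ell_S by lia; fold a d; lia | |].
    2: { apply poincare_upto_step; auto; [lra | apply IH; lia]. }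
    rewrite step_bound_S by lra. rewrite (Rmult_comm (step_bound _ _ _)).
    apply Rmult_le_compat_r; [lra|]. apply step_factor; auto; lia.
Qed.

(** ** Absorbing the remaining factors into a power of q *)

(* (1 + 1/n)^n <= e <= 3. *)
Lemma pow_one_plus_inv_le_3 n : (1 <= n)%nat -> (1 + / INR n) ^ n <= 3.
Proof.
  intros Hn. assert (Hx : 0 < / INR n) by (apply Rinv_0_lt_compat, lt_0_INR; lia).
  apply Rle_trans with (exp (/ INR n) ^ n).
  - apply pow_incr. split; [lra|]. left. apply exp_ineq1. lra.
  - rewrite <- Rpower_pow by apply exp_pos. unfold Rpower.
    rewrite ln_exp, Rinv_r by (apply not_0_INR; lia). exact exp_le_3.
Qed.

Lemma pow_self_le_fact n : INR n ^ n <= 3 ^ n * INR (fact n).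
Proof.
  induction n as [|n IH]; [simpl; lra|].
  destruct (Nat.eq_dec n 0) as [->|Hn]; [simpl; lra|].
  assert (HR : 1 <= INR n) by (apply (le_INR 1); lia).
  assert (Hstep : (INR n + 1) ^ n <= 3 * INR n ^ n).
  { replace (INR n + 1) with (INR n * (1 + / INR n)) by (field; lra).
    rewrite Rpow_mult_distr. pose proof (pow_one_plus_inv_le_3 n ltac:(lia)).
    pose proof (pow_le (INR n) n ltac:(lra)). nra. }
  rewrite S_INR, fact_simpl, mult_INR, S_INR. simpl pow.
  apply Rle_trans with ((INR n + 1) * (3 * INR n ^ n)); [apply Rmult_le_compat_l; lra|].
  pose proof (pow_le (INR n) n ltac:(lra)). nra.
Qed.

(* Since 2^r <= D / q, any geometric factor A^r with A <= 2^N is at most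
   D^N / q^N <= 2^P / q^N <= q^-(N+P). *)
Lemma geometric_absorb q D A r N P : 0 < q <= 1 / 2 -> 0 <= A -> q * 2 ^ r <= D ->
  A <= 2 ^ N -> D ^ N <= 2 ^ P -> A ^ r <= (/ q) ^ (N + P).
Proof.
  intros Hq HA HD HN HP.
  assert (HQ : 2 <= / q).
  { apply Rmult_le_reg_l with q; [lra|]. rewrite Rinv_r by lra. lra. }
  assert (H2r : 2 ^ r <= D * / q).
  { apply Rmult_le_reg_l with q; [lra|]. field_simplify; lra. }
  apply Rle_trans with ((2 ^ r) ^ N).
  { rewrite <- pow_mult, Nat.mul_comm, pow_mult. apply pow_incr; lra. }
  apply Rle_trans with ((D * / q) ^ N); [apply pow_incr; split; [apply pow_le|]; lra|].
  rewrite Rpow_mult_distr, pow_add, Rmult_comm. apply Rmult_le_compat_l; [apply pow_le; lra|].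
  apply Rle_trans with (2 ^ P); [exact HP | apply pow_incr; lra].
Qed.

Lemma final_bound q D r N P : 0 < q < 1 / 2 -> (1 <= r)%nat -> q * 2 ^ r <= D ->
  30 * (1 + 3 * D) <= 2 ^ N -> D ^ N <= 2 ^ P ->
  25 / q ^ 2 * growth q D r ^ (r - 1) <= / q ^ (6 + N + P) * INR (fact r) / q ^ r.
Proof.
  intros Hq Hr HD HN HP.
  assert (HD0 : 0 < D) by (pose proof (pow_lt 2 r ltac:(lra)); nra).
  set (Q := / q). set (B := 10 * (1 + 3 * D) * INR r).
  assert (HQ : 2 <= Q).
  { apply Rmult_le_reg_l with q; [lra|]. unfold Q. rewrite Rinv_r by lra. lra. }
  assert (HB : 1 <= B) by (unfold B; pose proof (le_INR 1 r ltac:(lia)); simpl in *; nra).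
  assert (Hfact := pow_self_le_fact r).
  assert (Habs := geometric_absorb q D (30 * (1 + 3 * D)) r N P ltac:(lra) ltac:(lra) HD HN HP).
  fold Q in Habs.
  assert (HBr : B ^ (r - 1) <= Q ^ (N + P) * INR (fact r)).
  { apply Rle_trans with (B ^ r); [apply Rle_pow; auto; lia|].
    unfold B. rewrite Rpow_mult_distr.
    replace (30 * (1 + 3 * D)) with (10 * (1 + 3 * D) * 3) in Habs by ring.
    rewrite Rpow_mult_distr in Habs.
    pose proof (pow_le (10 * (1 + 3 * D)) r ltac:(lra)).
    pose proof (pow_le 3 r ltac:(lra)). pose proof (pos_INR (fact r)). nra. }
  assert (H25 : 25 <= Q ^ 5) by (pose proof (pow_incr 2 Q 5 ltac:(lra)); simpl in *; lra).
  replace (25 / q ^ 2 * growth q D r ^ (r - 1)) with (25 * (Q * Q ^ r) * B ^ (r - 1)).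
  2: { unfold growth, Q, B, Rdiv. rewrite (Rpow_mult_distr _ (/ q)), !pow_inv.
       replace (q ^ r) with (q * q ^ (r - 1)) by (rewrite tech_pow_Rmult; f_equal; lia).
       field. split; [apply pow_nonzero|]; lra. }
  replace (/ q ^ (6 + N + P) * INR (fact r) / q ^ r)
    with (Q * Q ^ r * (Q ^ 5 * (Q ^ (N + P) * INR (fact r)))).
  2: { unfold Q. rewrite !pow_inv.
       replace (q ^ (6 + N + P)) with (q * (q ^ 5 * q ^ (N + P)))
         by (rewrite <- pow_add, tech_pow_Rmult; f_equal; lia).
       field. repeat split; try apply pow_nonzero; lra. }
  assert (0 <= Q * Q ^ r) by (pose proof (pow_le Q r ltac:(lra)); nra).
  pose proof (pow_le B (r - 1) ltac:(lra)).
  replace (25 * (Q * Q ^ r) * B ^ (r - 1)) with (Q * Q ^ r * (25 * B ^ (r - 1))) by ring.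
  apply Rmult_le_compat_l; auto. apply Rmult_le_compat; lra.
Qed.

Lemma exists_pow2_above x : exists N : nat, x <= 2 ^ N.
Proof.
  destruct (INR_unbounded x) as [n Hn]. exists n.
  enough (INR n <= 2 ^ n) by lra.
  clear Hn. induction n; [simpl; lra|].
  rewrite S_INR. simpl. pose proof (pow_R1_Rle 2 n ltac:(lra)). lra.
Qed.

(* T_rel(ell_r) <= q^-c(d) r! / (q^r 2^(r choose 2)) with c(d) = 6 + N + P,
   where 2^N >= 30 (1 + 3 d) and 2^P >= d^N. *)
Theorem mainTheorem12 :
  forall d : R, 0 < d ->
  exists c : R, 0 < c /\
    forall (q : R) (r : nat),
      0 < q -> q < 1 / 2 -> (2 < r)%nat ->
      2 ^ r <= d / q ->
      forall g : R, is_spectral_gap q (ell r r) g ->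
        / g <= Rpower q (- c) *
               (INR (fact r) / (q ^ r * 2 ^ (r * (r - 1) / 2))).
Proof.
  intros d Hd.
  destruct (exists_pow2_above (30 * (1 + 3 * d))) as [N HN].
  destruct (exists_pow2_above (d ^ N)) as [P HP].
  exists (INR (6 + N + P)). split; [apply lt_0_INR; lia|].
  intros q r Hq0 Hq1 Hr H2r g Hg.
  assert (HD : q * 2 ^ r <= d).
  { apply Rmult_le_reg_l with (/ q); [now apply Rinv_0_lt_compat|].
    rewrite <- Rmult_assoc, Rinv_l by lra. lra. }
  pose proof (ell_poincare q d r ltac:(lra) ltac:(lia) HD (r - 1) ltac:(lia)) as HT.
  replace (S (r - 1)) with r in HT by lia.
  pose proof (step_bound_pos q (growth q d r) (r - 1) Hq0
                (growth_pos q d r Hq0 Hd ltac:(lia))) as Hpos.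
  eapply Rle_trans; [exact (gap_bound q (ell r r) _ g ltac:(lra) Hpos (HT _ (le_n _)) Hg)|].
  unfold step_bound. replace (S (r - 1) * (r - 1))%nat with (r * (r - 1))%nat by lia.
  rewrite Rpower_Ropp, Rpower_pow by lra.
  pose proof (final_bound q d r N P ltac:(lra) ltac:(lia) HD HN HP).
  pose proof (pow_lt 2 (r * (r - 1) / 2) ltac:(lra)).
  replace (/ q ^ (6 + N + P) * (INR (fact r) / (q ^ r * 2 ^ (r * (r - 1) / 2))))
    with (/ q ^ (6 + N + P) * INR (fact r) / q ^ r / 2 ^ (r * (r - 1) / 2))
    by (field; repeat split; apply pow_nonzero; lra).
  apply Rmult_le_compat_r; [left; now apply Rinv_0_lt_compat | assumption].
Qed.
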